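(* Let $\mathcal{F}$ be a $T$-equivariant rank 2 $\mu$-stable reflexive sheaf on $\mathbb{P}^3$ with Chern classes $c_1,c_2,c_3$ (as integers) and toric data $\{(u_i,v_i,p_i)\}_{i=1,\dots,4}$. Then: (i) $c_3\equiv c_1c_2\pmod 2$; (ii) if $c_1\in\{-1,0\}$ then $c_2>0$; (iii) if $c_1=-1$ then $0\le c_3\le c_2^2$, and if $c_1=0$ then $0\le c_3\le c_2^2-c_2+2$. If $c_1=-1$, then $c_3=c_2^2$ if and only if one of the following holds: (a) there exist $\{i,j,k,l\}=\{1,2,3,4\}$ with $p_i=p_j$, $p_j,p_k,p_l$ mutually distinct, $v_i\ge1$, $v_j\ge1$, $v_k=1$, and $v_i+v_j=v_l$; (b) there exist $\{i,j,k,l\}=\{1,2,3,4\}$ with $v_i=0$, $p_j,p_k,p_l$ mutually distinct, $v_j=1$, and $v_k=v_l\ge1$. If $c_1=0$, then $c_3=c_2^2-c_2+2$ if and only if one of the following holds: (a) $p_1,p_2,p_3,p_4$ are mutually distinct and $v_1=v_2=v_3=v_4=1$; (b) there exist $\{i,j,k,l\}=\{1,2,3,4\}$ with $p_i=p_j$, $p_j,p_k,p_l$ mutually distinct, $v_i=v_j=1$ and $v_k=v_l=2$; (c) there exist $\{i,j,k,l\}=\{1,2,3,4\}$ with $v_i=0$, $p_j,p_k,p_l$ mutually distinct, and $v_j=v_k=v_l=2$.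
   Context: $T=(\mathbb{C}^* )^3$ is the dense open torus of $\mathbb{P}^3$; $\mathbb{P}^3$ is the toric variety of the fan in $\mathbb{Z}^3$ with rays $\rho_1,\dots,\rho_4$ generated by $n_1=e_1,n_2=e_2,n_3=e_3,n_4=-e_1-e_2-e_3$. By Klyachko's description, a $T$-equivariant rank 2 reflexive sheaf is given by four increasing filtrations $\{V^{\rho_i}(\lambda)\}_{\lambda\in\mathbb{Z}}$ of $\mathbb{C}^2$ (zero for $\lambda\ll0$, all of $\mathbb{C}^2$ for $\lambda\gg0$), the weight-$m$ sections over the chart of the cone spanned by $\rho_a,\rho_b,\rho_c$ being $V^{\rho_a}(\langle m,n_a\rangle)\cap V^{\rho_b}(\langle m,n_b\rangle)\cap V^{\rho_c}(\langle m,n_c\rangle)$; with these conventions a line bundle with jumps at $u_1,\dots,u_4$ has $c_1=-(u_1+\dots+u_4)H$. The toric data are the unique $u_i\in\mathbb{Z}$, $v_i\in\mathbb{Z}_{\ge0}$, $p_i\in\mathbb{P}^1=\mathrm{Gr}(1,\mathbb{C}^2)$ with $V^{\rho_i}(\lambda)=0$ for $\lambda<u_i$, $=p_i$ for $u_i\le\lambda<u_i+v_i$, $=\mathbb{C}^2$ for $\lambda\ge u_i+v_i$ (if $v_i=0$, $p_i$ does not occur). Stability is with respect to $\mathcal{O}(1)$; Chern classes are integers via $H^{2i}(\mathbb{P}^3,\mathbb{Z})=\mathbb{Z}H^i$, $H$ the hyperplane class. ''There exist $\{i,j,k,l\}=\{1,2,3,4\}$'' means for some ordering $i,j,k,l$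 of the four indices. *)

(* Equivariant rank 2 reflexive sheaves on P^3 are encoded
   by their Klyachko data (four increasing filtrations of C^2). *)
From mathcomp Require Import all_boot all_order all_algebra.
From mathcomp Require Import complex.
From mathcomp Require Import Rstruct.
From Stdlib Require Rdefinitions.
Set Implicit Arguments.
Unset Strict Implicit.
Unset Printing Implicit Defensive.
Import Order.TTheory GRing.Theory Num.Theory.
Local Open Scope ring_scope.

Definition CC : fieldType := (Rdefinitions.R)[i].

Definition sub2 := {vspace 'rV[CC]_2}.

(* Klyachko data of a T-equivariant rank 2 reflexive sheaf on P^3:
   V i lambda = V^{rho_(i+1)}(lambda), i : 'I_4, with
   n_1 = e_1, n_2 = e_2, n_3 = e_3, n_4 = -e_1-e_2-e_3. *)
Definition klyachko := 'I_4 -> int -> sub2.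

Definition is_filtration (V : klyachko) : Prop :=
  forall i : 'I_4,
    (forall a b : int, (a <= b)%R -> (V i a <= V i b)%VS) /\
    (exists a0 : int, forall a, (a <= a0)%R -> V i a = 0%VS) /\
    (exists a1 : int, forall a, (a1 <= a)%R -> V i a = fullv).

Definition toric_data (V : klyachko) (u : 'I_4 -> int) (v : 'I_4 -> nat)
  (p : 'I_4 -> sub2) : Prop :=
  forall i : 'I_4,
    (\dim (p i) = 1)%N /\
    forall l : int,
      V i l = (if (l < u i)%R then 0%VS
               else if (l < u i + (v i)%:Z)%R then p i else fullv).

(* Weight-m part of H^0(P^3, F(t)) : intersection over all four rays; the
   twist by O(t) shifts the filtration of rho_4 (O(t) has jump -t at rho_4). *)
Definition r1 : 'I_4 := @Ordinal 4 0 isT.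
Definition r2 : 'I_4 := @Ordinal 4 1 isT.
Definition r3 : 'I_4 := @Ordinal 4 2 isT.
Definition r4 : 'I_4 := @Ordinal 4 3 isT.

Definition sec_dim (V : klyachko) (t : int) (m1 m2 m3 : int) : nat :=
  \dim (V r1 m1 :&: V r2 m2 :&: V r3 m3 :&: V r4 ((- (m1 + m2 + m3) + t)%R))%VS.

Definition h0box (V : klyachko) (t : int) (N : nat) : nat :=
  (\sum_(a < (N + N).+1) \sum_(b < (N + N).+1) \sum_(c < (N + N).+1)
     sec_dim V t (a%:Z - N%:Z) (b%:Z - N%:Z) (c%:Z - N%:Z))%N.

Definition h0_is (V : klyachko) (t : int) (n : nat) : Prop :=
  exists N0 : nat, forall N : nat, (N0 <= N)%N -> h0box V t N = n.

(* 6 * chi(F(t)) by Riemann-Roch for a rank 2 reflexive sheaf on P^3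
   (Hartshorne, Stable reflexive sheaves, Thm 2.3):
   chi(F) = (c1^3 - 3 c1 c2 + 3 c3)/6 + (c1^2 - 2 c2) + 11 c1/6 + 2,
   applied to F(t): c1(F(t)) = c1 + 2t, c2(F(t)) = c2 + c1 t + t^2,
   c3(F(t)) = c3. *)
Definition rr6 (c1 c2 c3 t : int) : int :=
  let a := c1 + 2 * t in
  let b := c2 + c1 * t + t ^+ 2 in
  a ^+ 3 - 3 * a * b + 3 * c3 + 6 * (a ^+ 2 - 2 * b) + 11 * a + 12.

(* (c1, c2, c3) are the Chern classes of F: the Hilbert polynomial of F
   (h^0(F(t)) = chi(F(t)) for t >> 0) is the Riemann-Roch polynomial. *)
Definition chern (V : klyachko) (c1 c2 c3 : int) : Prop :=
  exists t0 : int, forall t : int, (t0 <= t)%R ->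
    exists n : nat, h0_is V t n /\ 6 * (n%:Z) = rr6 c1 c2 c3 t.

(* mu-stability (w.r.t. O(1)), tested on equivariant saturated rank 1
   subsheaves: for a line L of C^2, the subsheaf has filtrations
   V^{rho_i}(l) :&: L, a line bundle with jumps w_i, so c1 = -(sum w_i);
   stability: mu(sub) = -(sum w_i) < c1(F)/2. *)
Definition mu_stable (V : klyachko) : Prop :=
  forall c1 c2 c3 : int, chern V c1 c2 c3 ->
  forall L : sub2, \dim L = 1%N ->
  forall w : 'I_4 -> int,
    (forall i l, \dim (V i l :&: L)%VS = (w i <= l)%R :> nat) ->
    - 2 * (\sum_(i < 4) w i) < c1.

Definition perm4 (i j k l : 'I_4) : bool := uniq [:: i; j; k; l].

(* By Klyachko's description every weight space of a twist F(t) is an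
   intersection of four subspaces of C^2 read off from the toric data, so
   h^0(F(t)) for t >> 0 is a sum of lattice-point counts of tetrahedra.  Grouping
   the rays by their line p_i and recording the total multiplicity w of each
   distinct line, this gives c1 = -2U - V, c2 = e2(w) + U(U + V), c3 = e3(w),
   where U = sum u_i, V = sum v_i = sum w and e_k are elementary symmetric
   functions; testing stability on the subsheaves spanned by the lines p_i gives
   2 w < V.  Parity, positivity and the bounds on c3 are then inequalities between
   e2 and e3 of four nonnegative integers, each less than half of their sum; the
   extremal cases force w = (h, h, 1, 0) (c1 = -1) or w = (1, 1, 1, 1), (2, 2, 2, 0)
   (c1 = 0), which translate back into the listed configurations of (v_i, p_i). *)
From mathcomp Require Import all_boot all_order all_algebra.
From mathcomp Require Import complex Rstruct.
From mathcomp Require Import zify ring lra.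
Import Order.TTheory GRing.Theory Num.Theory.

(** * Elementary symmetric functions of four integers *)

Section SymmetricFunctions.

Local Open Scope ring_scope.

Definition esym2 (a b c d : int) : int := a*b + a*c + a*d + b*c + b*d + c*d.
Definition esym3 (a b c d : int) : int := a*b*c + a*b*d + a*c*d + b*c*d.

Lemma dvd2_mul_add (x y : int) : (2 %| x * y * (x + y))%Z.
Proof.
have [a [r [-> r01]]] : exists a r, x = a * 2 + r /\ (r = 0 \/ r = 1).
  exists (x %/ 2)%Z, (x %% 2)%Z; split; first exact: divz_eq.
  by have := @modz_ge0 x 2 isT; have := @ltz_pmod x 2 isT; lia.
have [b [s [-> s01]]] : exists b s, y = b * 2 + s /\ (s = 0 \/ s = 1).
  exists (y %/ 2)%Z, (y %% 2)%Z; split; first exact: divz_eq.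
  by have := @modz_ge0 y 2 isT; have := @ltz_pmod y 2 isT; lia.
apply/dvdzP; case: r01 => ->; case: s01 => ->.
- by exists (a * b * (a + b) * 4); ring.
- by exists (a * (b * 2 + 1) * (a * 2 + b * 2 + 1)); ring.
- by exists ((a * 2 + 1) * b * (a * 2 + b * 2 + 1)); ring.
- by exists ((a * 2 + 1) * (b * 2 + 1) * (a + b + 1)); ring.
Qed.

Lemma esym_parity (U w1 w2 w3 w4 : int) (S := w1 + w2 + w3 + w4) :
  (2 %| esym3 w1 w2 w3 w4 - (- 2 * U - S) * (esym2 w1 w2 w3 w4 + U * (U + S)))%Z.
Proof.
have -> : esym3 w1 w2 w3 w4 - (- 2 * U - S) * (esym2 w1 w2 w3 w4 + U * (U + S)) =
  2 * (2 * esym3 w1 w2 w3 w4 + U * (esym2 w1 w2 w3 w4 + U * (U + S)))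
  + w1 * w2 * (w1 + w2) + w1 * w3 * (w1 + w3) + w1 * w4 * (w1 + w4)
  + w2 * w3 * (w2 + w3) + w2 * w4 * (w2 + w4) + w3 * w4 * (w3 + w4) + U * S * (U + S).
  by rewrite /S /esym2 /esym3; ring.
by rewrite !rpredD ?dvd2_mul_add ?dvdz_mulr.
Qed.

Lemma esym2_newton (a b c d : int) :
  2 * esym2 a b c d = (a + b + c + d) ^+ 2 - (a ^+ 2 + b ^+ 2 + c ^+ 2 + d ^+ 2).
Proof. by rewrite /esym2; ring. Qed.

Lemma esym3_newton (a b c d : int) :
  6 * esym3 a b c d = (a + b + c + d) ^+ 3
    - 3 * (a + b + c + d) * (a ^+ 2 + b ^+ 2 + c ^+ 2 + d ^+ 2)
    + 2 * (a ^+ 3 + b ^+ 3 + c ^+ 3 + d ^+ 3).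
Proof. by rewrite /esym3; ring. Qed.

Lemma prod3_le_odd (x y z h : int) : 0 <= x -> 0 <= y -> 0 <= z ->
  x + y + z = 2 * h + 1 -> x <= h -> y <= h -> z <= h ->
  x * y * z <= (x * y + y * z + z * x - h * (h + 1)) ^+ 2 /\
  (x * y * z = (x * y + y * z + z * x - h * (h + 1)) ^+ 2 ->
     [\/ x = h /\ y = h, x = h /\ z = h | y = h /\ z = h]).
Proof.
move=> x0 y0 z0 S xh yh zh.
(* In the deficits z_i = h - x_i, h = 1 + z1 + z2 + z3 and the difference of
   the two sides is a polynomial in z with nonnegative coefficients. *)
have [z1 [z10 ex]] : exists z1, 0 <= z1 /\ x = h - z1 by exists (h - x); split; lia.
have [z2 [z20 ey]] : exists z2, 0 <= z2 /\ y = h - z2 by exists (h - y); split; lia.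
have [z3 [z30 ez]] : exists z3, 0 <= z3 /\ z = h - z3 by exists (h - z); split; lia.
subst x y z; have hE : h = 1 + z1 + z2 + z3 by lia.
have -> : (h - z1) * (h - z2) * (h - z3) = (1 + z2 + z3) * (1 + z1 + z3) * (1 + z1 + z2)
  by rewrite hE; ring.
have -> : (h - z1) * (h - z2) + (h - z2) * (h - z3) + (h - z3) * (h - z1) - h * (h + 1) =
   1 + z1 + z2 + z3 + z1 * z2 + z1 * z3 + z2 * z3 by rewrite hE; ring.
have gap : (1 + z2 + z3) * (1 + z1 + z3) * (1 + z1 + z2) + (z1 * z2 + z1 * z3 + z2 * z3) <=
   (1 + z1 + z2 + z3 + z1 * z2 + z1 * z3 + z2 * z3) ^+ 2 by rewrite expr2; nia.
have q12 : 0 <= z1 * z2 by apply: mulr_ge0.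
have q13 : 0 <= z1 * z3 by apply: mulr_ge0.
have q23 : 0 <= z2 * z3 by apply: mulr_ge0.
split=> [|eq]; first lra.
have /eqP : z1 * z2 = 0 by lra.
have /eqP : z1 * z3 = 0 by lra.
have /eqP : z2 * z3 = 0 by lra.
rewrite !mulf_eq0 => /orP[]/eqP ? /orP[]/eqP ? /orP[]/eqP ?;
  first [by apply: Or31; lia | by apply: Or32; lia | by apply: Or33; lia].
Qed.

Lemma prod3_le_even (x y z h : int) : 0 <= x -> 0 <= y -> 0 <= z ->
  x + y + z = 2 * h -> x <= h - 1 -> y <= h - 1 -> z <= h - 1 ->
  let c := x * y + y * z + z * x - h * h in
  x * y * z <= c ^+ 2 - c + 2 /\ (x * y * z = c ^+ 2 - c + 2 -> [/\ x = 2, y = 2 & z = 2]).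
Proof.
move=> x0 y0 z0 S xh yh zh c.
(* As in the odd case, now with deficits z_i = h - 1 - x_i and h = 3 + z1 + z2 + z3. *)
have [z1 [z10 ex]] : exists z1, 0 <= z1 /\ x = h - 1 - z1 by exists (h - 1 - x); split; lia.
have [z2 [z20 ey]] : exists z2, 0 <= z2 /\ y = h - 1 - z2 by exists (h - 1 - y); split; lia.
have [z3 [z30 ez]] : exists z3, 0 <= z3 /\ z = h - 1 - z3 by exists (h - 1 - z); split; lia.
subst x y z; have hE : h = 3 + z1 + z2 + z3 by lia.
have -> : c = 3 + 2 * z1 + 2 * z2 + 2 * z3 + z1 * z2 + z1 * z3 + z2 * z3 by rewrite /c hE; ring.
have -> : (h - 1 - z1) * (h - 1 - z2) * (h - 1 - z3) = (2 + z2 + z3) * (2 + z1 + z3) * (2 + z1 + z2)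
  by rewrite hE; ring.
have gap : (2 + z2 + z3) * (2 + z1 + z3) * (2 + z1 + z2) + 2 * (z1 + z2 + z3) <=
   (3 + 2 * z1 + 2 * z2 + 2 * z3 + z1 * z2 + z1 * z3 + z2 * z3) ^+ 2 -
   (3 + 2 * z1 + 2 * z2 + 2 * z3 + z1 * z2 + z1 * z3 + z2 * z3) + 2 by rewrite expr2; nia.
split=> [|eq]; first lra.
have : z1 + z2 + z3 <= 0 by lra.
by move=> ?; split; lia.
Qed.

Lemma esym3_le_odd (a b c d h : int) :
  0 <= d -> d <= c -> c <= b -> b <= a -> a + b + c + d = 2 * h + 1 -> a <= h ->
  let c2 := esym2 a b c d - h * (h + 1) in
  [/\ 0 < c2, esym3 a b c d <= c2 ^+ 2 &
      (esym3 a b c d = c2 ^+ 2 -> [/\ d = 0, c = 1, a = h & b = h])].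
Proof.
move=> d0 dc cb ba S ah c2.
have c2_gt0 : 0 < c2 by rewrite /c2 /esym2; nia.
have [dE|d1] : d = 0 \/ 1 <= d by lia.
  subst d.
  have [] := @prod3_le_odd a b c h; try lia.
  have -> : esym3 a b c 0 = a * b * c by rewrite /esym3; ring.
  have -> : a * b + b * c + c * a - h * (h + 1) = c2 by rewrite /c2 /esym2; ring.
  by move=> le eq; split=> // /eq [] [? ?]; split; lia.
(* Otherwise merge the two smallest entries and use the three-variable bound. *)
have [] := @prod3_le_odd a b (c + d) h; try lia; move=> le _.
have cd_gt0 : 0 < c * d by apply: mulr_gt0; lia.
have gap : 0 < c * d * (2 * c2 - c * d - a - b) by rewrite pmulr_rgt0 // /c2 /esym2; nia.
have lt : esym3 a b c d < c2 ^+ 2.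
  have -> : esym3 a b c d = a * b * (c + d) + c * d * (a + b) by rewrite /esym3; ring.
  have E : a * b + b * (c + d) + (c + d) * a - h * (h + 1) = c2 - c * d
    by rewrite /c2 /esym2; ring.
  rewrite E in le.
  have -> : c2 ^+ 2 = (c2 - c * d) ^+ 2 + c * d * (2 * c2 - c * d) by ring.
  lra.
by split=> [||eq]; [| exact: ltW | by move: lt; rewrite eq ltxx].
Qed.

Lemma esym3_le_even (a b c d h : int) :
  0 <= d -> d <= c -> c <= b -> b <= a -> a + b + c + d = 2 * h -> a <= h - 1 ->
  let c2 := esym2 a b c d - h * h in
  [/\ 0 < c2, esym3 a b c d <= c2 ^+ 2 - c2 + 2 &
      (esym3 a b c d = c2 ^+ 2 - c2 + 2 ->
        [/\ a = 1, b = 1, c = 1 & d = 1] \/ [/\ a = 2, b = 2, c = 2 & d = 0])].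
Proof.
move=> d0 dc cb ba S ah c2.
have c2_gt0 : 0 < c2 by rewrite /c2 /esym2; nia.
have [dE|d1] : d = 0 \/ 1 <= d by lia.
  subst d.
  have [] := @prod3_le_even a b c h; try lia.
  have -> : esym3 a b c 0 = a * b * c by rewrite /esym3; ring.
  have -> : a * b + b * c + c * a - h * h = c2 by rewrite /c2 /esym2; ring.
  by move=> le eq; split=> // /eq [? ? ?]; right; split.
have [far|near] : c + d + 2 <= a + b \/ a + b < c + d + 2 by lia.
  have [] := @prod3_le_even a b (c + d) h; try lia; move=> le _.
  have cd_gt0 : 0 < c * d by apply: mulr_gt0; lia.
  have gap : 0 < c * d * (2 * c2 - c * d - 1 - a - b) by rewrite pmulr_rgt0 // /c2 /esym2; nia.
  have lt : esym3 a b c d < c2 ^+ 2 - c2 + 2.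
    have -> : esym3 a b c d = a * b * (c + d) + c * d * (a + b) by rewrite /esym3; ring.
    have E : a * b + b * (c + d) + (c + d) * a - h * h = c2 - c * d
      by rewrite /c2 /esym2; ring.
    rewrite E in le.
    have -> : c2 ^+ 2 - c2 + 2 =
      (c2 - c * d) ^+ 2 - (c2 - c * d) + 2 + c * d * (2 * c2 - c * d - 1) by ring.
    lra.
  by split=> [||eq]; [| exact: ltW | by move: lt; rewrite eq ltxx].
(* The remaining case is a = b = c = d, where the gap factors explicitly. *)
have [ea eb ec] : [/\ a = d, b = d & c = d] by split; lia.
subst a b c.
have -> : c2 = 2 * d * d by rewrite /c2 /esym2 (_ : h = 2 * d); [ring | lia].
have -> : esym3 d d d d = 4 * d * d * d by rewrite /esym3; ring.
have -> : (2 * d * d) ^+ 2 - 2 * d * d + 2 = 4 * d * d * d + 2 * (d - 1) * (2 * d * d * d - d - 1)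
  by ring.
have gap_ge0 : 0 <= 2 * (d - 1) * (2 * d * d * d - d - 1) by apply: mulr_ge0; nia.
split=> [||eq]; [nia | lra |].
have : 2 * (d - 1) * (2 * d * d * d - d - 1) == 0 by apply/eqP; lra.
rewrite !mulf_eq0 => /orP[/orP[|]|] /eqP ?; [lia | left; split; lia |].
have d1' : d = 1 by nia.
by left; split; lia.
Qed.

Lemma esym_bounds_odd {a b c d U S c2 c3 : int} :
  0 <= d -> d <= c -> c <= b -> b <= a -> 2 * a < S -> a + b + c + d = S ->
  -1 = - 2 * U - S -> c2 = esym2 a b c d + U * (U + S) -> c3 = esym3 a b c d ->
  [/\ 0 < c2, 0 <= c3, c3 <= c2 ^+ 2 &
      (c3 = c2 ^+ 2 -> [/\ d = 0, c = 1, a = - U & b = - U])].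
Proof.
move=> d0 dc cb ba aS sumE c1E -> ->.
have SE : S = 2 * - U + 1 by lia.
have [] := @esym3_le_odd a b c d (- U) d0 dc cb ba; try lia.
have -> : esym2 a b c d - - U * (- U + 1) = esym2 a b c d + U * (U + S) by rewrite SE; ring.
move=> c2_gt0 le eq; split=> //; rewrite /esym3.
by rewrite !addr_ge0 // !mulr_ge0 //; lia.
Qed.

Lemma esym_bounds_even {a b c d U S c2 c3 : int} :
  0 <= d -> d <= c -> c <= b -> b <= a -> 2 * a < S -> a + b + c + d = S ->
  0 = - 2 * U - S -> c2 = esym2 a b c d + U * (U + S) -> c3 = esym3 a b c d ->
  [/\ 0 < c2, 0 <= c3, c3 <= c2 ^+ 2 - c2 + 2 &
      (c3 = c2 ^+ 2 - c2 + 2 ->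
        [/\ a = 1, b = 1, c = 1 & d = 1] \/ [/\ a = 2, b = 2, c = 2 & d = 0])].
Proof.
move=> d0 dc cb ba aS sumE c1E -> ->.
have SE : S = 2 * - U by lia.
have [] := @esym3_le_even a b c d (- U) d0 dc cb ba; try lia.
have -> : esym2 a b c d - - U * - U = esym2 a b c d + U * (U + S) by rewrite SE; ring.
move=> c2_gt0 le eq; split=> //; rewrite /esym3.
by rewrite !addr_ge0 // !mulr_ge0 //; lia.
Qed.

End SymmetricFunctions.

(** * Lattice points in a tetrahedron *)

Lemma sum_ord_cut (G : nat -> nat) (X n : nat) : X < n ->
  (forall k, X < k -> G k = 0) -> \sum_(k < n) G k = \sum_(k < X.+1) G k.
Proof.
move=> Xn G0; rewrite (big_ord_widen n G Xn) [in RHS]big_mkcond /=.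
by apply: eq_bigr => i _; case: ifP => // /negbT; rewrite -ltnNge => /G0.
Qed.

Lemma triangular_sum (m : nat) : 2 * \sum_(k < m) (m - k) = m * m.+1.
Proof.
elim: m => [|m IH]; first by rewrite big_ord0.
rewrite big_ord_recl /= mulnDr.
under eq_bigr do rewrite /bump /= add1n subSS.
by rewrite IH subn0; lia.
Qed.

Lemma tetrahedral_sum (M : nat) :
  3 * \sum_(k < M.+1) ((M - k).+1 * (M - k).+2) = M.+1 * M.+2 * M.+3.
Proof.
elim: M => [|M IH]; first by rewrite big_ord_recl big_ord0.
rewrite big_ord_recl /= subn0 mulnDr.
under eq_bigr do rewrite /bump /= add1n subSS.
by rewrite IH; lia.
Qed.

Lemma count_le1 (n X : nat) : X < n -> \sum_(k < n) (k <= X : nat) = X.+1.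
Proof.
move=> Xn; rewrite (@sum_ord_cut (fun k => (k <= X : nat)) X n Xn); last first.
  by move=> k; rewrite ltnNge => /negbTE ->.
by rewrite (eq_bigr (fun _ => 1)) ?sum1_card ?card_ord // => i _; rewrite -ltnS ltn_ord.
Qed.

Lemma count_le2 (n X : nat) : X < n ->
  2 * \sum_(k2 < n) \sum_(k3 < n) (k2 + k3 <= X : nat) = X.+1 * X.+2.
Proof.
move=> Xn.
rewrite (eq_bigr (fun k2 : 'I_n => X.+1 - k2)); last first.
  move=> k2 _; case: (leqP k2 X) => h.
    rewrite (eq_bigr (fun k3 : 'I_n => (k3 <= X - k2 : nat))); last first.
      by move=> k3 _; rewrite leq_subRL // addnC.
    by rewrite count_le1; lia.
  by rewrite big1 => [|k3 _]; lia.
rewrite (@sum_ord_cut (fun k => X.+1 - k) X n Xn); last by move=> k; lia.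
by rewrite triangular_sum.
Qed.

Definition simplex_count (M : nat) : nat :=
  \sum_(k1 < M.+1) \sum_(k2 < M.+1) \sum_(k3 < M.+1) (k1 + k2 + k3 <= M : nat).

Lemma simplex_countE (M : nat) : 6 * simplex_count M = M.+1 * M.+2 * M.+3.
Proof.
rewrite -tetrahedral_sum (_ : 6 = 3 * 2) // -mulnA big_distrr /=; congr (3 * _).
apply: eq_bigr => k1 _.
have k1M : k1 <= M by rewrite -ltnS.
rewrite -(@count_le2 M.+1 (M - k1)); last lia.
by congr (2 * _); apply: eq_bigr => k2 _; apply: eq_bigr => k3 _; congr nat_of_bool; lia.
Qed.

Lemma sum_box_shift (F : int -> nat) (N K : nat) (al : int) :
  (- (N%:Z) <= al)%R -> (al + K%:Z <= N%:Z)%R ->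
  (forall m : int, ((m < al)%R || (al + K%:Z < m)%R) -> F m = 0) ->
  \sum_(a < (N + N).+1) F (a%:Z - N%:Z)%R = \sum_(k < K.+1) F (al + k%:Z)%R.
Proof.
move=> h1 h2 F0.
pose j0 := absz (al + N%:Z)%R.
have j0E : (j0%:Z = al + N%:Z)%R by rewrite /j0 abszE ger0_norm //; lia.
rewrite -(big_mkord xpredT (fun a : nat => F (a%:Z - N%:Z)%R)).
rewrite (@big_cat_nat _ _ _ j0) /=; [|lia|lia].
rewrite (@big_cat_nat _ _ _ (j0 + K.+1) j0) /=; [|lia|lia].
rewrite big1_seq => [|i /andP[_]]; last first.
  by rewrite mem_index_iota => /andP[_ hi]; apply: F0; apply/orP; left; lia.
rewrite [X in (_ + (_ + X))%N]big1_seq => [|i /andP[_]]; last first.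
  by rewrite mem_index_iota => /andP[hi _]; apply: F0; apply/orP; right; lia.
rewrite add0n addn0 -{1}(add0n j0) big_addn addKn big_mkord.
by apply: eq_bigr => k _; congr F; lia.
Qed.

Definition box_sum (f : int -> int -> int -> nat) (N : nat) : nat :=
  \sum_(a < (N + N).+1) \sum_(b < (N + N).+1) \sum_(c < (N + N).+1)
     f (a%:Z - N%:Z)%R (b%:Z - N%:Z)%R (c%:Z - N%:Z)%R.

Definition in_simplex (al1 al2 al3 be m1 m2 m3 : int) : bool :=
  [&& (al1 <= m1)%R, (al2 <= m2)%R, (al3 <= m3)%R & (m1 + m2 + m3 <= be)%R].

Lemma box_sum_simplex (N M : nat) (al1 al2 al3 be : int) :
  (M%:Z = be - al1 - al2 - al3)%R ->
  (- (N%:Z) <= al1)%R -> (al1 + M%:Z <= N%:Z)%R ->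
  (- (N%:Z) <= al2)%R -> (al2 + M%:Z <= N%:Z)%R ->
  (- (N%:Z) <= al3)%R -> (al3 + M%:Z <= N%:Z)%R ->
  box_sum (fun m1 m2 m3 => in_simplex al1 al2 al3 be m1 m2 m3) N = simplex_count M.
Proof.
move=> ME h1 h1' h2 h2' h3 h3'.
rewrite /box_sum (@sum_box_shift (fun m1 => \sum_(b < (N + N).+1) \sum_(c < (N + N).+1)
     in_simplex al1 al2 al3 be m1 (b%:Z - N%:Z) (c%:Z - N%:Z)) N M al1) //; last first.
  move=> m /orP H; rewrite big1 // => b _; rewrite big1 // => c _.
  by apply/eqP; rewrite eqb0; apply/and4P => -[? ? ? ?]; case: H; lia.
apply: eq_bigr => k1 _.
rewrite (@sum_box_shift (fun m2 => \sum_(c < (N + N).+1)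
     in_simplex al1 al2 al3 be (al1 + k1%:Z) m2 (c%:Z - N%:Z)) N M al2) //; last first.
  move=> m /orP H; rewrite big1 // => c _.
  apply/eqP; rewrite eqb0; apply/and4P => -[? ? ? ?].
  by have := ltn_ord k1; case: H; lia.
apply: eq_bigr => k2 _.
rewrite (@sum_box_shift (fun m3 =>
     (in_simplex al1 al2 al3 be (al1 + k1%:Z) (al2 + k2%:Z) m3 : nat)) N M al3) //; last first.
  move=> m /orP H; apply/eqP; rewrite eqb0; apply/and4P => -[? ? ? ?].
  by have := ltn_ord k1; have := ltn_ord k2; case: H; lia.
apply: eq_bigr => k3 _; congr nat_of_bool.
by apply/and4P/idP => [[? ? ? ?]|?]; [|split]; lia.
Qed.

Lemma eq_box_sum f g N : (forall m1 m2 m3, f m1 m2 m3 = g m1 m2 m3) ->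
  box_sum f N = box_sum g N.
Proof. by move=> fg; rewrite /box_sum; do 3 (apply: eq_bigr => ? _); apply: fg. Qed.

Lemma box_sumD f g N :
  box_sum (fun m1 m2 m3 => f m1 m2 m3 + g m1 m2 m3) N = box_sum f N + box_sum g N.
Proof.
rewrite /box_sum -big_split; apply: eq_bigr => a _; rewrite -big_split.
by apply: eq_bigr => b _; rewrite -big_split.
Qed.

Lemma box_sumMl c f N : box_sum (fun m1 m2 m3 => c * f m1 m2 m3) N = c * box_sum f N.
Proof.
rewrite /box_sum big_distrr; apply: eq_bigr => a _; rewrite big_distrr.
by apply: eq_bigr => b _; rewrite big_distrr.
Qed.

Lemma box_sum_sum (F : 'I_4 -> int -> int -> int -> nat) N :
  box_sum (fun m1 m2 m3 => \sum_(i < 4) F i m1 m2 m3) N = \sum_(i < 4) box_sum (F i) N.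
Proof.
rewrite /box_sum [RHS]exchange_big; apply: eq_bigr => a _; rewrite [RHS]exchange_big.
by apply: eq_bigr => b _; rewrite [RHS]exchange_big.
Qed.

Lemma perm4_mem {i j k l} : perm4 i j k l -> forall x, x \in [:: i; j; k; l].
Proof.
move=> P x; have /subset_cardP : #|[:: i; j; k; l]| = #|'I_4|.
  by rewrite (card_uniqP P) card_ord.
by move=> /(_ (subset_predT _)) ->.
Qed.

Lemma sum_perm4 (M : nmodType) (F : 'I_4 -> M) {i j k l} : perm4 i j k l ->
  (\sum_(x < 4) F x = F i + F j + F k + F l)%R.
Proof.
move=> P; rewrite (eq_bigl (mem [:: i; j; k; l])) => [|x]; last by rewrite /= perm4_mem.
by rewrite -big_uniq // !big_cons big_nil /= addr0 !addrA.
Qed.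

Lemma sum_perm4n (F : 'I_4 -> nat) {i j k l} : perm4 i j k l ->
  \sum_(x < 4) F x = F i + F j + F k + F l.
Proof. exact: sum_perm4. Qed.

Lemma sum_ord4 (M : nmodType) (F : 'I_4 -> M) :
  (\sum_(i < 4) F i = F r1 + F r2 + F r3 + F r4)%R.
Proof. exact: (sum_perm4 M F (isT : perm4 r1 r2 r3 r4)). Qed.

Lemma sum_ord4n (F : 'I_4 -> nat) : \sum_(i < 4) F i = F r1 + F r2 + F r3 + F r4.
Proof. exact: sum_ord4. Qed.

Lemma forall_ord4 (P : 'I_4 -> bool) : [forall i, P i] = [&& P r1, P r2, P r3 & P r4].
Proof.
apply/forallP/and4P => [H|[? ? ? ?] i]; first by split; apply: H.
by have := perm4_mem (isT : perm4 r1 r2 r3 r4) i; rewrite !inE => /or4P[] /eqP ->.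
Qed.

Lemma perm4E i j k l : perm4 i j k l = [&& i != j, i != k, i != l, j != k, j != l & k != l].
Proof. by rewrite /perm4 /= !inE !negb_or !andbT -!andbA. Qed.

Lemma perm4_swap12 {i j k l} : perm4 i j k l -> perm4 j i k l.
Proof. by rewrite /perm4 -(perm_uniq (permEl (perm_catCA [:: i] [:: j] [:: k; l]))). Qed.

Lemma perm4_swap23 {i j k l} : perm4 i j k l -> perm4 i k j l.
Proof.
rewrite /perm4 -(perm_uniq (_ : perm_eq [:: i; j; k; l] [:: i; k; j; l])) //.
by rewrite perm_cons (permEl (perm_catCA [:: j] [:: k] [:: l])).
Qed.

Lemma perm4_swap34 {i j k l} : perm4 i j k l -> perm4 i j l k.
Proof.
rewrite /perm4 -(perm_uniq (_ : perm_eq [:: i; j; k; l] [:: i; j; l; k])) //.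
by rewrite !perm_cons (permEl (perm_catCA [:: k] [:: l] [::])).
Qed.

Lemma perm4_fourth {j k l} : j != k -> j != l -> k != l -> exists m, perm4 m j k l.
Proof.
move=> jk jl kl; have [m mjkl] : exists m, m \notin [:: j; k; l].
  apply/existsP; rewrite -negb_forall; apply/negP => /forallP all_in.
  have : #|'I_4| <= #|[:: j; k; l]| by apply/subset_leq_card/subsetP => x _; apply: all_in.
  by rewrite card_ord (card_uniqP _) //= !inE negb_or jk jl kl.
by exists m; rewrite /perm4 /= mjkl !inE negb_or jk jl kl.
Qed.

Lemma sort_ord4 (w : 'I_4 -> int) : exists i1 i2 i3 i4, perm4 i1 i2 i3 i4 /\
  [/\ (w i2 <= w i1)%R, (w i3 <= w i2)%R & (w i4 <= w i3)%R].
Proof.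
pose le i j := (w j <= w i)%R.
have : perm_eq (sort le (enum 'I_4)) (enum 'I_4) by rewrite perm_sort.
have : sorted le (sort le (enum 'I_4)) by apply: sort_sorted => i j; apply: le_total.
case: (sort le _) => [|a [|b [|c [|d [|? ?]]]]] /= sorted_s /[dup] /perm_size;
  rewrite size_enum_ord // => _ /perm_uniq uniq_s.
exists a, b, c, d; split; first by rewrite /perm4 uniq_s enum_uniq.
by move: sorted_s; rewrite andbT => /and3P.
Qed.

Section SymmetricPerm4.

Local Open Scope ring_scope.

Lemma esym2_perm (w : 'I_4 -> int) {i j k l} : perm4 i j k l ->
  esym2 (w r1) (w r2) (w r3) (w r4) = esym2 (w i) (w j) (w k) (w l).
Proof.
move=> P; apply: (@mulfI _ 2) => //; rewrite !esym2_newton.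
rewrite -(sum_perm4 _ w P) -(sum_perm4 _ (fun x => w x ^+ 2) P).
by rewrite (sum_ord4 _ w) (sum_ord4 _ (fun x => w x ^+ 2)).
Qed.

Lemma esym3_perm (w : 'I_4 -> int) {i j k l} : perm4 i j k l ->
  esym3 (w r1) (w r2) (w r3) (w r4) = esym3 (w i) (w j) (w k) (w l).
Proof.
move=> P; apply: (@mulfI _ 6) => //; rewrite !esym3_newton.
rewrite -(sum_perm4 _ w P) -(sum_perm4 _ (fun x => w x ^+ 2) P).
rewrite -(sum_perm4 _ (fun x => w x ^+ 3) P) (sum_ord4 _ w) (sum_ord4 _ (fun x => w x ^+ 2)).
by rewrite (sum_ord4 _ (fun x => w x ^+ 3)).
Qed.

End SymmetricPerm4.

Lemma dim_full2 : \dim (fullv : sub2) = 2.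
Proof. by rewrite dimvf dim_matrix. Qed.

Lemma line_subv_eq (P Q : sub2) : \dim P = 1 -> \dim Q = 1 -> (P <= Q)%VS = (P == Q).
Proof. by move=> hP hQ; rewrite eqEdim hP hQ leqnn andbT. Qed.

Lemma dim_cap_lines (P Q : sub2) : \dim P = 1 -> \dim Q = 1 -> \dim (P :&: Q)%VS = (P == Q).
Proof.
move=> hP hQ; case: eqP => [->|ne]; first by rewrite capvv hQ.
have := dimvS (capvSl P Q); rewrite hP leq_eqVlt ltnS leqn0 => /orP[/eqP d1|/eqP -> //].
case: ne; have /eqP <- : (P :&: Q)%VS == P by rewrite eqEdim capvSl hP d1.
by apply/eqP; rewrite eqEdim capvSr hQ d1.
Qed.

Definition cap4 (A : 'I_4 -> sub2) : sub2 := (A r1 :&: A r2 :&: A r3 :&: A r4)%VS.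

Lemma subv_cap4 (A : 'I_4 -> sub2) (W : sub2) :
  (W <= cap4 A)%VS = [forall i, (W <= A i)%VS].
Proof. by rewrite forall_ord4 /cap4 !subv_cap !andbA. Qed.

Lemma cap4_subv (A : 'I_4 -> sub2) i : (cap4 A <= A i)%VS.
Proof. by move: (subvv (cap4 A)); rewrite subv_cap4 => /forallP. Qed.

Definition leader (p : 'I_4 -> sub2) (i : 'I_4) : bool :=
  [forall j : 'I_4, (j < i)%N ==> (p j != p i)].

Definition nlines (p : 'I_4 -> sub2) : nat := \sum_(i < 4) leader p i.

Lemma sum_leader_line (p : 'I_4 -> sub2) (s : 'I_4) :
  \sum_(i < 4) (leader p i && (p i == p s) : nat) = 1.
Proof.
case: (@arg_minnP _ s (fun i => p i == p s) (fun i : 'I_4 => (i : nat))) => //.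
move=> i0 /eqP Pi0 min0.
rewrite (eq_bigr (fun i => if i == i0 then 1 else 0)); last first.
  move=> i _; case: (boolP (i == i0)) => [/eqP ->|ne].
    rewrite Pi0 !eqxx andbT; suff -> : leader p i0 by [].
    apply/forallP => j; apply/implyP => ji0.
    by apply/negP => /eqP e; have := min0 j; rewrite e Pi0 eqxx => /(_ isT); lia.
  case: (boolP (p i == p s)) => [/eqP e|]; last by rewrite andbF.
  rewrite andbT /leader; case: (boolP [forall _, _]) => // /forallP H.
  have := min0 i; rewrite e eqxx => /(_ isT) le.
  have lt : (i0 < i)%N.
    by rewrite ltn_neqAle le andbT; apply: contra ne => /eqP h; apply/eqP/val_inj.
  by move: (H i0); rewrite lt /= Pi0 e eqxx.
by rewrite -big_mkcond big_pred1_eq.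
Qed.

Lemma leader_neq (p : 'I_4 -> sub2) x y : leader p x -> leader p y -> x != y -> p x != p y.
Proof.
move=> /forallP hx /forallP hy nxy.
case: (ltngtP x y) => h; first by move: (hy x); rewrite h.
  by move: (hx y); rewrite h eq_sym.
by case/eqP: nxy; apply: val_inj.
Qed.

Definition line_weight (p : 'I_4 -> sub2) (v : 'I_4 -> nat) (i : 'I_4) : nat :=
  \sum_(j < 4) (p j == p i) * v j.
Definition vsum (v : 'I_4 -> nat) : nat := \sum_(j < 4) v j.
Definition usum (u : 'I_4 -> int) : int := (u r1 + u r2 + u r3 + u r4)%R.

Lemma line_weight_eq p v x y : p x = p y -> line_weight p v x = line_weight p v y.
Proof. by rewrite /line_weight => ->. Qed.

Lemma line_weight_distinct p v x : (forall i j : 'I_4, i != j -> p i != p j) ->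
  line_weight p v x = v x.
Proof.
move=> D; rewrite /line_weight (bigD1 x) //= eqxx mul1n big1 ?addn0 // => z zx.
by rewrite (negbTE (D _ _ zx)).
Qed.

Lemma line_weight_fourth p v {m j k l} : perm4 m j k l ->
  [/\ p j != p k, p j != p l & p k != p l] ->
  [/\ line_weight p v j = (p m == p j) * v m + v j,
      line_weight p v k = (p m == p k) * v m + v k &
      line_weight p v l = (p m == p l) * v m + v l].
Proof.
move=> P [jk jl kl]; rewrite /line_weight !(sum_perm4n _ P) !eqxx.
by rewrite !(eq_sym (p k)) !(eq_sym (p l)) (negbTE jk) (negbTE jl) (negbTE kl); split; lia.
Qed.

Lemma vsum_perm4 v {m j k l} : perm4 m j k l -> vsum v = v m + v j + v k + v l.
Proof. exact: sum_perm4n. Qed.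

Definition off_line (p : 'I_4 -> sub2) (v : 'I_4 -> nat) (s : 'I_4) (j : 'I_4) : nat :=
  (p j != p s) * v j.

Lemma off_line_compl p v i : \sum_(j < 4) off_line p v i j + line_weight p v i = vsum v.
Proof.
rewrite /line_weight /vsum /off_line -big_split; apply: eq_bigr => j _.
by case: (p j == p i); rewrite /= ?mul0n ?mul1n ?addn0.
Qed.

(* The total multiplicity of the line [p i], recorded once per line (at its leader). *)
Definition merged_weight (p : 'I_4 -> sub2) (v : 'I_4 -> nat) (i : 'I_4) : nat :=
  (leader p i * line_weight p v i)%N.

Lemma merged_weight_gt0 p v x :
  0 < merged_weight p v x -> leader p x /\ merged_weight p v x = line_weight p v x.
Proof. by rewrite /merged_weight; case: (leader p x); rewrite ?mul1n ?mul0n. Qed.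

Lemma merged_weight_le p v x : merged_weight p v x <= line_weight p v x.
Proof. by rewrite /merged_weight; case: (leader p x); rewrite ?mul1n ?mul0n. Qed.

Definition line_power_sum (p : 'I_4 -> sub2) (v : 'I_4 -> nat) (k : nat) : nat :=
  \sum_(j < 4) v j * line_weight p v j ^ k.

Lemma sum_merged_weight_exp p v k :
  (\sum_(i < 4) merged_weight p v i ^ k.+1 = line_power_sum p v k)%N.
Proof.
rewrite /line_power_sum; transitivity (\sum_(i < 4) \sum_(j < 4)
    (leader p i && (p i == p j)) * (v j * line_weight p v j ^ k))%N.
  apply: eq_bigr => i _; rewrite /merged_weight expnMn.
  rewrite (_ : leader p i ^ k.+1 = leader p i)%N; last by case: (leader p i); rewrite ?exp1n ?exp0n.
  rewrite expnS {1}/line_weight big_distrl big_distrr /=; apply: eq_bigr => j _.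
  case: (eqVneq (p i) (p j)) => [pij|_]; last by rewrite andbF !mul0n muln0.
  by rewrite andbT mul1n /line_weight pij.
rewrite exchange_big; apply: eq_bigr => j _.
by rewrite -big_distrl /= sum_leader_line mul1n.
Qed.

Lemma sum_merged_weight p v : (\sum_(i < 4) merged_weight p v i)%N = vsum v.
Proof.
rewrite -[LHS](eq_bigr _ (fun i _ => expn1 _)) sum_merged_weight_exp.
by apply: eq_bigr => j _; rewrite expn0 muln1.
Qed.

Lemma vsum_merged_weight p v :
  ((merged_weight p v r1)%:Z + (merged_weight p v r2)%:Z + (merged_weight p v r3)%:Z
  + (merged_weight p v r4)%:Z = (vsum v)%:Z)%R.
Proof. by rewrite -(sum_merged_weight p v) sum_ord4n !PoszD. Qed.

Lemma line_power_sum_perm4 p v k {i j l m} : perm4 i j l m ->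
  line_power_sum p v k = v i * line_weight p v i ^ k + v j * line_weight p v j ^ k
    + v l * line_weight p v l ^ k + v m * line_weight p v m ^ k.
Proof. exact: sum_perm4n. Qed.

Lemma three_lines {p v j k l} : j != k -> j != l -> k != l ->
  0 < merged_weight p v j -> 0 < merged_weight p v k -> 0 < merged_weight p v l ->
  exists m, [/\ perm4 m j k l, [/\ p j != p k, p j != p l & p k != p l] &
    [/\ merged_weight p v j = (p m == p j) * v m + v j,
        merged_weight p v k = (p m == p k) * v m + v k &
        merged_weight p v l = (p m == p l) * v m + v l]].
Proof.
move=> jk jl kl /merged_weight_gt0[lj ->] /merged_weight_gt0[lk ->] /merged_weight_gt0[ll ->].
have [m P] := perm4_fourth jk jl kl; exists m.
have dl : [/\ p j != p k, p j != p l & p k != p l] by split; apply: leader_neq.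
by split=> //; apply: line_weight_fourth.
Qed.

(** * Weight spaces *)

Definition toric_space (u : 'I_4 -> int) (v : 'I_4 -> nat) (p : 'I_4 -> sub2)
  (i : 'I_4) (l : int) : sub2 :=
  if (l < u i)%R then 0%VS else if (l < u i + (v i)%:Z)%R then p i else fullv.

Definition in_orthant (u : 'I_4 -> int) (th : 'I_4 -> nat) (l : 'I_4 -> int) : bool :=
  [forall j, (u j + (th j)%:Z <= l j)%R].

Section WeightSpace.

Variables (u : 'I_4 -> int) (v : 'I_4 -> nat) (p : 'I_4 -> sub2) (l : 'I_4 -> int).
Hypothesis lines : forall i, \dim (p i) = 1.

Let W := cap4 (fun i => toric_space u v p i (l i)).

Lemma line_sub_weight_space s : (p s <= W)%VS = in_orthant u (off_line p v s) l.
Proof.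
rewrite subv_cap4; apply: eq_forallb => j; rewrite /toric_space /off_line.
case: ifP => [lu|/negbT]; last rewrite -leNgt => ?.
  by rewrite subv0 -dimv_eq0 lines /=; apply/esym/negbTE; rewrite -ltNge; case: (_ != _); lia.
case: ifP => [luv|/negbT]; last by rewrite subvf -leNgt => ?; apply/esym; case: (_ != _); lia.
by rewrite line_subv_eq // eq_sym; case: eqP => _ /=; apply/esym; lia.
Qed.

Lemma dim_weight_space :
  \dim W + nlines p * in_orthant u v l =
  2 * in_orthant u v l + \sum_(i < 4) leader p i * in_orthant u (off_line p v i) l.
Proof.
under eq_bigr do rewrite -line_sub_weight_space.
case: (boolP (in_orthant u v l)) => [/forallP full|/forallPn [k]].
  have -> : W = fullv.
    apply/eqP; rewrite eqEdim subvf /=; apply: dimvS; rewrite subv_cap4.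
    apply/forallP => i; move: (full i); rewrite /toric_space.
    case: ifP => [? ?|_]; first lia.
    by case: ifP => [? ?|_ _]; [lia | rewrite subvv].
  rewrite dim_full2 !muln1; congr (_ + _).
  by apply: eq_bigr => i _; rewrite subvf muln1.
rewrite -ltNge => luv.
have Wk : (W <= toric_space u v p k (l k))%VS := cap4_subv _ k.
rewrite muln0 !addn0 muln0.
case: (eqVneq W 0%VS) => [W0|].
  rewrite W0 dimv0 big1 // => s _.
  by rewrite subv0 -dimv_eq0 lines muln0.
rewrite -dimv_eq0 => dW.
have eWk : W = p k.
  move: Wk; rewrite /toric_space luv; case: ifP => _.
    by rewrite subv0 -dimv_eq0 (negbTE dW).
  move=> Wp; apply/eqP; rewrite eqEdim Wp lines; lia.
rewrite eWk lines -[LHS](sum_leader_line p k) add0n; apply: eq_bigr => s _.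
by rewrite line_subv_eq //; case: leader; case: (_ == _).
Qed.

End WeightSpace.

(* The pairings <m, n_i> of a weight m with the rays, the last one twisted by O(t). *)
Definition ray_pairing (m1 m2 m3 t : int) : 'I_4 -> int := fun i =>
  match nat_of_ord i with 0 => m1 | 1 => m2 | 2 => m3 | _ => (- (m1 + m2 + m3) + t)%R end.

Definition box_radius (u : 'I_4 -> int) (t : int) : nat :=
  `|t|%N + `|u r1|%N + `|u r2|%N + `|u r3|%N + `|u r4|%N.

Lemma box_sum_orthant u th t N (M : nat) :
  (M%:Z = t - (u r1 + u r2 + u r3 + u r4) - (th r1 + th r2 + th r3 + th r4)%:Z)%R ->
  box_radius u t <= N ->
  box_sum (fun m1 m2 m3 => in_orthant u th (ray_pairing m1 m2 m3 t)) N = simplex_count M.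
Proof.
rewrite /box_radius => ME BN.
rewrite -(@box_sum_simplex N M (u r1 + (th r1)%:Z) (u r2 + (th r2)%:Z) (u r3 + (th r3)%:Z)
  (t - u r4 - (th r4)%:Z)); try lia.
apply: eq_box_sum => m1 m2 m3; congr nat_of_bool.
rewrite /in_orthant forall_ord4 /in_simplex /ray_pairing /=.
by apply/and4P/and4P => -[? ? ? ?]; split; lia.
Qed.

(** * Extremal configurations *)

Definition odd_extremal_a (p : 'I_4 -> sub2) (v : 'I_4 -> nat) : Prop :=
  exists i j k l : 'I_4, [/\ perm4 i j k l, p i = p j,
             [/\ p j != p k, p j != p l & p k != p l] &
             [/\ (1 <= v i)%N, (1 <= v j)%N, v k = 1%N & (v i + v j)%N = v l]].
Definition odd_extremal_b (p : 'I_4 -> sub2) (v : 'I_4 -> nat) : Prop :=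
  exists i j k l : 'I_4, [/\ perm4 i j k l, v i = 0%N,
             [/\ p j != p k, p j != p l & p k != p l],
             v j = 1%N & v k = v l /\ (1 <= v k)%N].
Definition even_extremal_a (p : 'I_4 -> sub2) (v : 'I_4 -> nat) : Prop :=
  (forall i j : 'I_4, i != j -> p i != p j) /\ (forall i, v i = 1%N).
Definition even_extremal_b (p : 'I_4 -> sub2) (v : 'I_4 -> nat) : Prop :=
  exists i j k l : 'I_4, [/\ perm4 i j k l, p i = p j,
                 [/\ p j != p k, p j != p l & p k != p l],
                 v i = 1%N /\ v j = 1%N & v k = 2%N /\ v l = 2%N].
Definition even_extremal_c (p : 'I_4 -> sub2) (v : 'I_4 -> nat) : Prop :=
  exists i j k l : 'I_4, [/\ perm4 i j k l, v i = 0%N,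
                 [/\ p j != p k, p j != p l & p k != p l]
               & [/\ v j = 2%N, v k = 2%N & v l = 2%N]].

Lemma odd_extremal_merge {p v m j x y} : perm4 m j x y ->
  [/\ p j != p x, p j != p y & p x != p y] -> p m = p x ->
  v j = 1 -> v m + v x = v y -> 0 < v m ->
  odd_extremal_a p v \/ odd_extremal_b p v.
Proof.
move=> /perm4_swap23 /perm4_swap12 P [jx jy xy] mx vj vmx vm.
case: (posnP (v x)) => [vx0|vx].
  right; exists x, j, m, y; rewrite mx -vmx vx0 addn0.
  by split=> //; exact: perm4_swap23.
left; exists x, m, j, y; rewrite mx addnC vmx; split=> //.
by split=> //; rewrite eq_sym.
Qed.

Lemma odd_extremal_of_weights p v (h : nat) j k l : j != k -> j != l -> k != l ->
  merged_weight p v j = 1 -> merged_weight p v k = h -> merged_weight p v l = h ->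
  0 < h -> vsum v = 2 * h + 1 -> odd_extremal_a p v \/ odd_extremal_b p v.
Proof.
move=> jk jl kl wj wk wl h0 VE.
have := @three_lines p v j k l jk jl kl; rewrite wj wk wl => /(_ isT h0 h0).
case=> m [P [pjk pjl pkl]]; rewrite (vsum_perm4 v P) in VE.
case: (posnP (v m)) => [vm0|vm].
  rewrite vm0 !muln0 !add0n => -[vj vk vl].
  by right; exists m, j, k, l; rewrite -vj -vk -vl.
case: (eqVneq (p m) (p j)) => [mj|mj]; [|case: (eqVneq (p m) (p k)) => [mk|mk]].
- rewrite mj (negbTE pjk) (negbTE pjl) /= mul1n !add0n => -[vmj vk vl].
  have [vm1 vj0] : v m = 1 /\ v j = 0 by clear -vmj vm; lia.
  right; exists j, m, k, l; rewrite mj -vk -vl; split=> //; exact: perm4_swap12.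
- rewrite mk (negbTE pkl) /= mul1n !add0n => -[vj vmk vl].
  by apply: (odd_extremal_merge P) => //; rewrite -vmk -vl.
- case: (eqVneq (p m) (p l)) => [ml|ml] /=; rewrite ?mul1n ?mul0n !add0n => -[vj vk vml].
    apply: (odd_extremal_merge (perm4_swap34 P)); rewrite -?vj -?vk -?vml //.
    by split; rewrite // eq_sym.
  by exfalso; clear -VE vm vj vk vml; lia.
Qed.

Lemma even_extremal_merge {p v m x y z} : perm4 m x y z ->
  [/\ p x != p y, p x != p z & p y != p z] -> p m = p x ->
  v y = 2 -> v z = 2 -> v m + v x = 2 -> 0 < v m ->
  even_extremal_b p v \/ even_extremal_c p v.
Proof.
move=> P [xy xz yz] mx vy vz vmx vm.
case: (posnP (v x)) => [vx0|vx].
  right; exists x, m, y, z; rewrite mx; move: vmx; rewrite vx0 addn0 => vm2.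
  by split=> //; exact: perm4_swap12.
have [vm1 vx1] : v m = 1 /\ v x = 1 by clear -vmx vm vx; lia.
by left; exists m, x, y, z.
Qed.

Lemma even_extremal_of_weights p v j k l : j != k -> j != l -> k != l ->
  merged_weight p v j = 2 -> merged_weight p v k = 2 -> merged_weight p v l = 2 ->
  vsum v = 6 -> even_extremal_b p v \/ even_extremal_c p v.
Proof.
move=> jk jl kl wj wk wl VE.
have := @three_lines p v j k l jk jl kl; rewrite wj wk wl => /(_ isT isT isT).
case=> m [P [pjk pjl pkl]]; rewrite (vsum_perm4 v P) in VE.
case: (posnP (v m)) => [vm0|vm].
  rewrite vm0 !muln0 !add0n => -[vj vk vl].
  by right; exists m, j, k, l; rewrite -vj -vk -vl.
case: (eqVneq (p m) (p j)) => [mj|mj]; [|case: (eqVneq (p m) (p k)) => [mk|mk]].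
- rewrite mj (negbTE pjk) (negbTE pjl) /= mul1n !add0n => -[vmj vk vl].
  by apply: (even_extremal_merge P).
- rewrite mk (negbTE pkl) /= mul1n !add0n => -[vj vmk vl].
  apply: (even_extremal_merge (perm4_swap23 P)) => //.
  by split; rewrite // eq_sym.
- case: (eqVneq (p m) (p l)) => [ml|ml] /=; rewrite ?mul1n ?mul0n !add0n => -[vj vk vml].
    apply: (even_extremal_merge (perm4_swap23 (perm4_swap34 P))) => //.
    by split; rewrite // eq_sym.
  by exfalso; clear -VE vm vj vk vml; lia.
Qed.

Lemma even_extremal_of_unit_weights p v : (forall x, merged_weight p v x = 1) ->
  even_extremal_a p v.
Proof.
move=> W; have R x : leader p x /\ merged_weight p v x = line_weight p v x.
  by apply: merged_weight_gt0; rewrite W.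
have D i j : i != j -> p i != p j by apply: leader_neq; [case: (R i) | case: (R j)].
by split=> // x; rewrite -(line_weight_distinct p v x D); case: (R x) => _ <-.
Qed.

Lemma odd_extremal_power_sums p v : odd_extremal_a p v \/ odd_extremal_b p v ->
  exists A : nat, [/\ vsum v = 2 * A + 1, line_power_sum p v 1 = 2 * A ^ 2 + 1
                    & line_power_sum p v 2 = 2 * A ^ 3 + 1].
Proof.
case=> [[i [j [k [l [P pij [jk jl kl] [vi vj vk vl]]]]]] | [i [j [k [l [P vi0 dl vj [vkl vk]]]]]]].
- have [] := line_weight_fourth p v P (And3 jk jl kl).
  rewrite pij eqxx (negbTE jk) (negbTE jl) mul1n !add0n => Lj Lk Ll.
  rewrite !(line_power_sum_perm4 _ _ _ P) (vsum_perm4 v P) (line_weight_eq _ v _ _ pij).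
  rewrite Lj Lk Ll vk -vl.
  by exists (v i + v j); split; nia.
- have [] := line_weight_fourth p v P dl.
  rewrite vi0 !muln0 !add0n => Lj Lk Ll.
  rewrite !(line_power_sum_perm4 _ _ _ P) (vsum_perm4 v P) Lj Lk Ll vi0 vj -vkl.
  by exists (v k); split; nia.
Qed.

Lemma even_extremal_power_sums p v :
  [\/ even_extremal_a p v, even_extremal_b p v | even_extremal_c p v] ->
  [/\ vsum v = 4, line_power_sum p v 1 = 4 & line_power_sum p v 2 = 4] \/
  [/\ vsum v = 6, line_power_sum p v 1 = 12 & line_power_sum p v 2 = 24].
Proof.
case=> [[D V1]|[i [j [k [l [P pij [jk jl kl] [vi vj] [vk vl]]]]]]
         |[i [j [k [l [P vi0 dl [vj vk vl]]]]]]].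
- by left; rewrite /line_power_sum /vsum !sum_ord4n !(line_weight_distinct _ _ _ D) !V1.
- have [] := line_weight_fourth p v P (And3 jk jl kl).
  rewrite pij eqxx (negbTE jk) (negbTE jl) mul1n !add0n => Lj Lk Ll.
  rewrite !(line_power_sum_perm4 _ _ _ P) (vsum_perm4 v P) (line_weight_eq _ v _ _ pij) Lj Lk Ll.
  by rewrite vi vj vk vl; right.
- have [] := line_weight_fourth p v P dl.
  rewrite vi0 !muln0 !add0n => Lj Lk Ll.
  rewrite !(line_power_sum_perm4 _ _ _ P) (vsum_perm4 v P) Lj Lk Ll.
  by rewrite vi0 vj vk vl; right.
Qed.

(** * Hilbert polynomial *)

Section HilbertPolynomial.

Local Open Scope ring_scope.

(* [cube_poly x = 6 * binomial (x + 3) 3]. *)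
Definition cube_poly (x : int) : int := (x + 1) * (x + 2) * (x + 3).

Lemma simplex_count_int (M : nat) : 6 * (simplex_count M)%:Z = cube_poly M%:Z.
Proof.
have := congr1 (fun n : nat => n%:Z) (simplex_countE M); rewrite /= !PoszM => ->.
by rewrite /cube_poly; congr (_ * _ * _); lia.
Qed.

Lemma rr6_inj (c1 c2 c3 d1 d2 d3 T : int) :
  (forall t, T <= t -> rr6 c1 c2 c3 t = rr6 d1 d2 d3 t) -> [/\ c1 = d1, c2 = d2 & c3 = d3].
Proof.
move=> H.
have [E0 E1 E2] : [/\ rr6 c1 c2 c3 T = rr6 d1 d2 d3 T, rr6 c1 c2 c3 (T + 1) = rr6 d1 d2 d3 (T + 1)
  & rr6 c1 c2 c3 (T + 2) = rr6 d1 d2 d3 (T + 2)] by split; apply: H; lia.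
(* Second, first and zeroth differences isolate c1, then c2, then c3. *)
have e1 : rr6 c1 c2 c3 (T + 2) - 2 * rr6 c1 c2 c3 (T + 1) + rr6 c1 c2 c3 T =
  rr6 d1 d2 d3 (T + 2) - 2 * rr6 d1 d2 d3 (T + 1) + rr6 d1 d2 d3 T + 6 * (c1 - d1)
  by rewrite /rr6; ring.
rewrite E0 E1 E2 in e1; have {e1} c1E : c1 = d1 by lia.
subst d1.
have e2 : rr6 c1 c2 c3 (T + 1) - rr6 c1 c2 c3 T =
  rr6 c1 d2 d3 (T + 1) - rr6 c1 d2 d3 T - 6 * (c2 - d2) by rewrite /rr6; ring.
rewrite E0 E1 in e2; have {e2} c2E : c2 = d2 by lia.
subst d2.
have e3 : rr6 c1 c2 c3 T = rr6 c1 c2 d3 T + 3 * (c3 - d3) by rewrite /rr6; ring.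
by rewrite E0 in e3; split=> //; lia.
Qed.

Lemma rr6_cube_poly (U s w1 w2 w3 w4 t : int) : s = t - U - (w1 + w2 + w3 + w4) ->
  cube_poly (s + w1) + cube_poly (s + w2) + cube_poly (s + w3) + cube_poly (s + w4)
    - 2 * cube_poly s =
  rr6 (- 2 * U - (w1 + w2 + w3 + w4))
      (esym2 w1 w2 w3 w4 + U * (U + (w1 + w2 + w3 + w4))) (esym3 w1 w2 w3 w4) t.
Proof. by move=> ->; rewrite /cube_poly /rr6 /esym2 /esym3; ring. Qed.

Lemma PoszX (n k : nat) : (n ^ k)%:Z = n%:Z ^+ k.
Proof. by rewrite -natz natrX natz. Qed.

End HilbertPolynomial.

(** * Chern classes of an equivariant reflexive sheaf *)

Section ToricSheaf.

Context {V : klyachko} {u : 'I_4 -> int} {v : 'I_4 -> nat} {p : 'I_4 -> sub2}.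
Hypothesis toric : toric_data V u v p.

Let lines i : \dim (p i) = 1. Proof. by case: (toric i). Qed.

Lemma sec_dim_toric t m1 m2 m3 :
  sec_dim V t m1 m2 m3 = \dim (cap4 (fun i => toric_space u v p i (ray_pairing m1 m2 m3 t i))).
Proof. by rewrite /sec_dim /cap4 !(fun i => (toric i).2). Qed.

Lemma h0box_toric {t N} (M := absz (t - usum u - (vsum v)%:Z)%R) :
  (0 <= t - usum u - (vsum v)%:Z)%R -> box_radius u t <= N ->
  h0box V t N + nlines p * simplex_count M =
  2 * simplex_count M + \sum_(i < 4) leader p i * simplex_count (M + line_weight p v i).
Proof.
move=> s0 BN; pose orth th m1 m2 m3 : nat := in_orthant u th (ray_pairing m1 m2 m3 t).
have box_orth th K : (K%:Z = t - usum u - (\sum_(j < 4) th j)%:Z)%R ->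
    box_sum (orth th) N = simplex_count K.
  by move=> KE; apply: box_sum_orthant => //; rewrite KE /usum sum_ord4n; lia.
have ME : (M%:Z = t - usum u - (vsum v)%:Z)%R by rewrite abszE ger0_norm.
rewrite -(box_orth v M) //.
rewrite (eq_bigr (fun i =>
    box_sum (fun m1 m2 m3 => leader p i * orth (off_line p v i) m1 m2 m3) N)); last first.
  move=> i _; rewrite box_sumMl (box_orth _ (M + line_weight p v i)) //.
  by rewrite PoszD ME -(off_line_compl p v i) PoszD; lia.
rewrite -!box_sumMl -box_sum_sum -!box_sumD; apply: eq_box_sum => m1 m2 m3.
by rewrite sec_dim_toric; apply: dim_weight_space.
Qed.

Local Open Scope ring_scope.

Lemma h0box_formula {t N} (s := t - usum u - (vsum v)%:Z) :
  0 <= s -> (box_radius u t <= N)%N ->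
  6 * (h0box V t N)%:Z = \sum_(i < 4) cube_poly (s + (merged_weight p v i)%:Z) - 2 * cube_poly s.
Proof.
move=> s0 BN.
have E := congr1 (fun n : nat => n%:Z) (h0box_toric s0 BN).
rewrite /= -/s /nlines !sum_ord4n !PoszD !PoszM in E; rewrite sum_ord4.
have sE : (absz s)%:Z = s by rewrite abszE ger0_norm.
have C0 := simplex_count_int (absz s); rewrite sE in C0.
have C k : 6 * (simplex_count (absz s + line_weight p v k))%:Z =
    cube_poly (s + (line_weight p v k)%:Z) by rewrite simplex_count_int PoszD sE.
have D k : (leader p k)%:Z * cube_poly (s + (line_weight p v k)%:Z) - (leader p k)%:Z * cube_poly s
    = cube_poly (s + (merged_weight p v k)%:Z) - cube_poly s.
  rewrite /merged_weight; case: (leader p k) => /=; last by rewrite !mul0r subrr addr0 subrr.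
  by rewrite !mul1r mul1n.
have C1 := C r1; have C2 := C r2; have C3 := C r3; have C4 := C r4.
have D1 := D r1; have D2 := D r2; have D3 := D r3; have D4 := D r4.
nia.
Qed.

Lemma chern_toric {c1 c2 c3} : chern V c1 c2 c3 ->
  let w i := (merged_weight p v i)%:Z in
  [/\ c1 = - 2 * usum u - (vsum v)%:Z,
      c2 = esym2 (w r1) (w r2) (w r3) (w r4) + usum u * (usum u + (vsum v)%:Z)
    & c3 = esym3 (w r1) (w r2) (w r3) (w r4)].
Proof.
move=> [t0 H] w; rewrite -(vsum_merged_weight p v).
apply: (@rr6_inj _ _ _ _ _ _ ((absz t0)%:Z + (absz (usum u + (vsum v)%:Z))%:Z)) => t tT.
have [n [[N0 HN] <-]] := H t ltac:(lia).
have s0 : 0 <= t - usum u - (vsum v)%:Z by lia.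
rewrite -(HN (maxn N0 (box_radius u t))) ?leq_maxl // (h0box_formula s0 (leq_maxr _ _)) sum_ord4.
by apply: rr6_cube_poly; rewrite vsum_merged_weight.
Qed.

Lemma chern_power_sums {c1 c2 c3} : chern V c1 c2 c3 ->
  let U := usum u in let S := (vsum v)%:Z in
  let P1 := (line_power_sum p v 1)%:Z in let P2 := (line_power_sum p v 2)%:Z in
  [/\ c1 = - 2 * U - S, 2 * (c2 - U * (U + S)) = S ^+ 2 - P1
    & 6 * c3 = S ^+ 3 - 3 * S * P1 + 2 * P2].
Proof.
move=> hC U S P1 P2; have [c1E -> ->] := chern_toric hC.
split; [exact: c1E | |];
  rewrite /U /S /P1 /P2 -!sum_merged_weight_exp -(sum_merged_weight p v);
  move: (merged_weight p v) => w; rewrite !sum_ord4n !PoszD !PoszX.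
  by rewrite addrK esym2_newton.
by rewrite esym3_newton.
Qed.

Lemma odd_extremal_chern {c2 c3} : chern V (-1) c2 c3 ->
  odd_extremal_a p v \/ odd_extremal_b p v -> c3 = c2 ^+ 2.
Proof.
move=> hC /odd_extremal_power_sums [A [VE P1E P2E]].
have [] := chern_power_sums hC; rewrite VE P1E P2E => c1E c2E c3E.
have UE : usum u = - A%:Z by lia.
rewrite UE in c2E; have c2A : c2 = A%:Z by nia.
by rewrite c2A; nia.
Qed.

Lemma even_extremal_chern {c2 c3} : chern V 0 c2 c3 ->
  [\/ even_extremal_a p v, even_extremal_b p v | even_extremal_c p v] -> c3 = c2 ^+ 2 - c2 + 2.
Proof.
move=> hC /even_extremal_power_sums E; have [] := chern_power_sums hC.
by case: E => -[-> -> ->] c1E c2E c3E; nia.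
Qed.

Hypothesis stable : mu_stable V.

Lemma stable_line_weight {c1 c2 c3} : chern V c1 c2 c3 ->
  forall i, (2 * line_weight p v i < vsum v)%N.
Proof.
move=> hC i; have [c1E _ _] := chern_toric hC.
(* The line [p i] spans a subsheaf whose jumps are [u j + off_line p v i j]. *)
pose w j := u j + (off_line p v i j)%:Z.
have jumps j l : \dim (V j l :&: p i)%VS = (w j <= l) :> nat.
  rewrite (toric j).2 /w /off_line.
  case: ifP => lu; first by rewrite cap0v dimv0; case: leP => //; case: (_ != _); lia.
  case: ifP => luv.
    by rewrite dim_cap_lines // eq_sym; case: eqP => _ /=; case: leP => //; lia.
  by rewrite capfv lines; case: leP => //; case: (_ != _); lia.
have := stable c1 c2 c3 hC (p i) (lines i) w jumps.
have := off_line_compl p v i; rewrite sum_ord4n => /(congr1 Posz).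
by rewrite (sum_ord4 _ w) /w c1E /usum !PoszD; lia.
Qed.

Lemma chern_sorted_weights {c1 c2 c3} : chern V c1 c2 c3 ->
  exists i1 i2 i3 i4, perm4 i1 i2 i3 i4 /\
    let w i := (merged_weight p v i)%:Z in
    [/\ [/\ w i4 <= w i3, w i3 <= w i2 & w i2 <= w i1],
        2 * w i1 < (vsum v)%:Z, w i1 + w i2 + w i3 + w i4 = (vsum v)%:Z,
        c2 = esym2 (w i1) (w i2) (w i3) (w i4) + usum u * (usum u + (vsum v)%:Z)
      & c3 = esym3 (w i1) (w i2) (w i3) (w i4)].
Proof.
move=> hC; have [_ c2E c3E] := chern_toric hC.
have lt i : (2 * merged_weight p v i < vsum v)%N.
  exact: leq_ltn_trans (leq_mul (leqnn 2) (merged_weight_le p v i)) (stable_line_weight hC i).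
have SW := vsum_merged_weight p v.
(* Only the values of the merged weights matter from now on; abstracting them
   also keeps the tactics below from unfolding [merged_weight]. *)
move: (merged_weight p v) lt SW c2E c3E => mw lt SW c2E c3E.
pose w i := (mw i)%:Z.
have [i1 [i2 [i3 [i4 [P [s12 s23 s34]]]]]] := sort_ord4 w.
exists i1, i2, i3, i4; split; first exact: P.
split; [by split | by have := lt i1; rewrite /w; lia | | |].
- by rewrite -(sum_perm4 _ w P) sum_ord4.
- by rewrite c2E (esym2_perm w P).
- by rewrite c3E (esym3_perm w P).
Qed.

Lemma chern_bounds_odd {c2 c3} : chern V (-1) c2 c3 ->
  [/\ 0 < c2, 0 <= c3, c3 <= c2 ^+ 2 &
      (c3 = c2 ^+ 2 -> odd_extremal_a p v \/ odd_extremal_b p v)].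
Proof.
move=> hC; have [c1E _ _] := chern_toric hC.
have [i1 [i2 [i3 [i4 [P [[s34 s23 s12] w1 S c2E c3E]]]]]] := chern_sorted_weights hC.
have [c2_gt0 c3_ge0 le eq] := esym_bounds_odd (le0z_nat _) s34 s23 s12 w1 S c1E c2E c3E.
split=> // /eq [w4 w3 w1' w2].
move: P; rewrite perm4E => /andP[n12 /andP[n13 /andP[_ /andP[n23 _]]]].
apply: (@odd_extremal_of_weights p v (merged_weight p v i1) i3 i1 i2);
  [by rewrite eq_sym | by rewrite eq_sym | exact: n12 | lia ..].
Qed.

Lemma chern_bounds_even {c2 c3} : chern V 0 c2 c3 ->
  [/\ 0 < c2, 0 <= c3, c3 <= c2 ^+ 2 - c2 + 2 &
      (c3 = c2 ^+ 2 - c2 + 2 ->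
       [\/ even_extremal_a p v, even_extremal_b p v | even_extremal_c p v])].
Proof.
move=> hC; have [c1E _ _] := chern_toric hC.
have [i1 [i2 [i3 [i4 [P [[s34 s23 s12] w1 S c2E c3E]]]]]] := chern_sorted_weights hC.
have [c2_gt0 c3_ge0 le eq] := esym_bounds_even (le0z_nat _) s34 s23 s12 w1 S c1E c2E c3E.
split=> // /eq [[wi1 wi2 wi3 wi4]|[wi1 wi2 wi3 wi4]].
  apply: Or31; apply: even_extremal_of_unit_weights => x.
  by have := perm4_mem P x; rewrite !inE => /or4P[] /eqP ->; lia.
move: P; rewrite perm4E => /andP[n12 /andP[n13 /andP[_ /andP[n23 _]]]].
have : even_extremal_b p v \/ even_extremal_c p v.
  by apply: (@even_extremal_of_weights p v i1 i2 i3) => //; lia.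
by case=> ?; [apply: Or32 | apply: Or33].
Qed.

End ToricSheaf.

Local Open Scope ring_scope.

Theorem proposition3p8 (V : klyachko) (u : 'I_4 -> int) (v : 'I_4 -> nat)
  (p : 'I_4 -> sub2) (c1 c2 c3 : int) :
  is_filtration V -> toric_data V u v p -> chern V c1 c2 c3 -> mu_stable V ->
  [/\ (2 %| c3 - c1 * c2)%Z,
      (c1 = -1 \/ c1 = 0) -> 0 < c2,
      (c1 = -1 -> 0 <= c3 <= c2 ^+ 2) /\
      (c1 = 0 -> 0 <= c3 <= c2 ^+ 2 - c2 + 2),
      c1 = -1 ->
        (c3 = c2 ^+ 2 <->
         (exists i j k l : 'I_4, [/\ perm4 i j k l, p i = p j,
             [/\ p j != p k, p j != p l & p k != p l] &
             [/\ (1 <= v i)%N, (1 <= v j)%N, v k = 1%N & (v i + v j)%N = v l]])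
         \/
         (exists i j k l : 'I_4, [/\ perm4 i j k l, v i = 0%N,
             [/\ p j != p k, p j != p l & p k != p l],
             v j = 1%N & v k = v l /\ (1 <= v k)%N]))
    & c1 = 0 ->
        (c3 = c2 ^+ 2 - c2 + 2 <->
         [\/ (forall i j : 'I_4, i != j -> p i != p j) /\ (forall i, v i = 1%N),
             (exists i j k l : 'I_4, [/\ perm4 i j k l, p i = p j,
                 [/\ p j != p k, p j != p l & p k != p l],
                 v i = 1%N /\ v j = 1%N & v k = 2%N /\ v l = 2%N])
           | (exists i j k l : 'I_4, [/\ perm4 i j k l, v i = 0%N,
                 [/\ p j != p k, p j != p l & p k != p l]
               & [/\ v j = 2%N, v k = 2%N & v l = 2%N]])])].
Proof.
move=> _ toric hC stable.
have odd : c1 = -1 -> [/\ 0 < c2, 0 <= c3, c3 <= c2 ^+ 2 &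
    (c3 = c2 ^+ 2 <-> odd_extremal_a p v \/ odd_extremal_b p v)].
  move=> c1E; rewrite c1E in hC; have [? ? ? eq] := chern_bounds_odd toric stable hC.
  by split=> //; split=> [/eq|]; last exact: (@odd_extremal_chern V u v p toric c2 c3 hC).
have even : c1 = 0 -> [/\ 0 < c2, 0 <= c3, c3 <= c2 ^+ 2 - c2 + 2 & (c3 = c2 ^+ 2 - c2 + 2 <->
    [\/ even_extremal_a p v, even_extremal_b p v | even_extremal_c p v])].
  move=> c1E; rewrite c1E in hC; have [? ? ? eq] := chern_bounds_even toric stable hC.
  by split=> //; split=> [/eq|]; last exact: (@even_extremal_chern V u v p toric c2 c3 hC).
split.
- have [-> -> ->] := chern_toric toric hC.
  by rewrite -(vsum_merged_weight p v); apply: esym_parity.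
- by case=> [/odd|/even] [].
- by split=> [/odd|/even] [_ -> ->].
- by move=> /odd [].
- by move=> /even [].
Qed.
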